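(* Let $q$ be the semi-Markov kernel of a homogeneous $d$-dimensional multi-time Markov renewal chain (so in particular $q(0_d)=O_s$). Then $\mathbbm{I}_s-q$ has a convolutional inverse, given by $$u:=(\mathbbm{I}_s-q)^{(-1)}=\sum_{n\ge0}q^{(n)}.$$
   Context: $E=\{1,\dots,s\}$; $\mathcal{M}_s(\mathbb{N}^d)$ is the set of functions $\mathbb{N}^d\to\mathbb{R}^{s\times s}$, with convolution $[A*B](k)=\sum_{l+l'=k}A(l)B(l')$, identity $\mathbbm{I}_s$ ($\mathbbm{I}_s(0_d)=I_s$, zero elsewhere), powers $A^{(0)}=\mathbbm{I}_s$, $A^{(n)}=A*A^{(n-1)}$, and convolutional inverse $A^{(-1)}$ with $A*A^{(-1)}=A^{(-1)}*A=\mathbbm{I}_s$. A homogeneous $d$-dimensional multi-time Markov renewal chain is a process $(J_n,S_n)_{n\in\mathbb{N}}$, $J_n\in E$, $S_n\in\mathbb{N}^d$, $S_0=0_d$, $S_n<S_{n+1}$ (componentwise $\le$ and not equal), such that a.s. $\mathbb{P}(J_{n+1}=j,S_{n+1}-S_n=k\mid J_{0:n},S_{0:n})=q_{J_nj}(k)$ with $q_{ij}(k)=\mathbb{P}(J_{n+1}=j,S_{n+1}-S_n=k\mid J_n=i)$ independent of $n$; $q\in\mathcal{M}_s(\mathbb{N}^d)$ is its semi-Markov kernel. The series is pointwise and finite at each point. *)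

From HB Require Import structures.
From mathcomp Require Import all_boot all_order all_algebra.
From mathcomp Require Import all_classical all_reals all_analysis.
Set Implicit Arguments. Unset Strict Implicit. Unset Printing Implicit Defensive.
Import Order.TTheory GRing.Theory Num.Theory.
Local Open Scope classical_set_scope.
Local Open Scope ring_scope.

Definition vec (d : nat) := {ffun 'I_d -> nat}.
Definition vzero d : vec d := [ffun=> 0%N].
Definition vle d (l k : vec d) : bool := [forall i, (l i <= k i)%N].
Definition vlt d (l k : vec d) : bool := vle l k && (l != k).
Definition vsub d (k l : vec d) : vec d := [ffun i => (k i - l i)%N].
Definition vbnd d (k : vec d) : nat := (\max_(i < d) k i)%N.
Definition vof d m (l : {ffun 'I_d -> 'I_m}) : vec d := [ffun i => nat_of_ord (l i)].

Definition mxseq (R : pzRingType) s d := vec d -> 'M[R]_s.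

Definition mId (R : pzRingType) s d : mxseq R s d :=
  fun k => if k == vzero d then 1%:M else 0.

(* [A*B](k) = sum_{l + l' = k} A(l) B(l') ; l ranges over l <= k, l' = k - l *)
Definition mconv (R : pzRingType) s d (A B : mxseq R s d) : mxseq R s d :=
  fun k => \sum_(l : {ffun 'I_d -> 'I_(vbnd k).+1} | vle (vof l) k)
             A (vof l) *m B (vsub k (vof l)).

Fixpoint mpow (R : pzRingType) s d (A : mxseq R s d) (n : nat) : mxseq R s d :=
  match n with
  | 0%N => @mId R s d
  | n'.+1 => mconv A (mpow A n')
  end.

Definition is_conv_inverse (R : pzRingType) s d (A B : mxseq R s d) : Prop :=
  (forall k, mconv A B k = @mId R s d k) /\ (forall k, mconv B A k = @mId R s d k).

(* q is the semi-Markov kernel of a homogeneous d-dimensional multi-time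
   Markov renewal chain (J_n, S_n) with values in E = 'I_s and N^d:
   S_0 = 0, S_n < S_{n+1}, and for every history (J_{0:n}, S_{0:n}) = (js, ks)
   P(J_{0:n}=js, S_{0:n}=ks, J_{n+1}=j, S_{n+1}-S_n=k)
     = q_{js_n j}(k) * P(J_{0:n}=js, S_{0:n}=ks)
   (discrete form of the a.s. conditional-probability identity). *)
Definition hist (T : Type) s d (J : nat -> T -> 'I_s) (S : nat -> T -> vec d)
  n (js : n.+1.-tuple 'I_s) (ks : n.+1.-tuple (vec d)) : set T :=
  [set w | forall m : 'I_n.+1, J m w = tnth js m /\ S m w = tnth ks m].

Definition is_MTMRC_kernel (R : realType) s d (q : mxseq R s d) : Prop :=
  exists (dsp : measure_display) (T : measurableType dsp) (P : probability T R)
         (J : nat -> T -> 'I_s) (S : nat -> T -> vec d),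
    [/\ (forall n j, measurable [set w | J n w = j]),
        (forall n k, measurable [set w | S n w = k]),
        (forall w, S 0%N w = vzero d),
        (forall n w, vlt (S n w) (S n.+1 w)) &
        (forall n (js : n.+1.-tuple 'I_s) (ks : n.+1.-tuple (vec d)) j k,
           P (hist J S js ks `&` [set w | J n.+1 w = j /\ vsub (S n.+1 w) (S n w) = k])
           = ((q k (tnth js ord_max) j)%:E * P (hist J S js ks))%E)].

From HB Require Import structures.
From mathcomp Require Import all_boot all_order all_algebra.
From mathcomp Require Import all_classical all_reals all_analysis.
From mathcomp Require Import zify.
Import Order.TTheory GRing.Theory Num.Theory.
Local Open Scope ring_scope.
Set Implicit Arguments. Unset Strict Implicit.

(* Since [q 0 = 0], every factor of a product contributing to [q^(n) k] carries
   a nonzero index, so [q^(n) k = 0] once [n] exceeds [k_1 + ... + k_d]: the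
   Neumann series is a finite sum at each [k]. The telescoping identities
   [(I - q) * sum_(n < N) q^(n) = I - q^(N) = sum_(n < N) q^(n) * (I - q)],
   which rest on the associativity of convolution, then give the two-sided
   inverse, since convolution at [k] only sees indices below [k]. *)

Section Vectors.
Variable d : nat.
Implicit Types k l m p x : vec d.

Definition vadd m p : vec d := [ffun i => (m i + p i)%N].

Definition vsum k : nat := (\sum_(i < d) k i)%N.

Lemma vleP l k : reflect (forall i : 'I_d, l i <= k i)%N (vle l k).
Proof. exact: forallP. Qed.

Lemma vle_trans l k m : vle l k -> vle k m -> vle l m.
Proof. by move=> /vleP lk /vleP km; apply/vleP => i; apply: leq_trans (lk i) (km i). Qed.

Lemma vle_refl k : vle k k.
Proof. exact/vleP. Qed.

Lemma vle0v k : vle (vzero d) k.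
Proof. by apply/vleP => i; rewrite ffunE. Qed.

Lemma vsub_le k l : vle (vsub k l) k.
Proof. by apply/vleP => i; rewrite ffunE leq_subr. Qed.

Lemma vsubv0 k : vsub k (vzero d) = k.
Proof. by apply/ffunP => i; rewrite !ffunE subn0. Qed.

Lemma vsub_eq0 l k : vle l k -> (vsub k l == vzero d) = (l == k).
Proof.
move=> /vleP lk; apply/eqP/eqP => [/ffunP kl0 | ->].
  apply/ffunP => i; apply/eqP; rewrite eqn_leq lk -subn_eq0.
  by have := kl0 i; rewrite !ffunE => ->.
by apply/ffunP => i; rewrite !ffunE subnn.
Qed.

Lemma vaddKv m p : vsub (vadd m p) m = p.
Proof. by apply/ffunP => i; rewrite !ffunE addKn. Qed.

Lemma vsubDA k m p : vsub k (vadd m p) = vsub (vsub k m) p.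
Proof. by apply/ffunP => i; rewrite !ffunE subnDA. Qed.

Lemma vsum_sub l k : vle l k -> (vsum (vsub k l) + vsum l)%N = vsum k.
Proof.
by move=> /vleP lk; rewrite /vsum -big_split /=; apply: eq_bigr => i _; rewrite ffunE subnK.
Qed.

Lemma vsum_le l k : vle l k -> (vsum l <= vsum k)%N.
Proof. by move=> lk; rewrite -(vsum_sub lk) leq_addl. Qed.

Lemma vsum_gt0 l : l != vzero d -> (0 < vsum l)%N.
Proof.
apply: contraR; rewrite -eqn0Ngt /vsum sum_nat_eq0 => /forallP l0.
by apply/eqP/ffunP => i; rewrite ffunE; apply/eqP; have := l0 i.
Qed.

Lemma vof_inj n : injective (@vof d n).
Proof.
by move=> l1 l2 /ffunP l12; apply/ffunP => i; apply/val_inj; have := l12 i; rewrite !ffunE.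
Qed.

Definition box k : seq (vec d) :=
  [seq l <- map (@vof d _) (enum {ffun 'I_d -> 'I_(vbnd k).+1}) | vle l k].

Lemma mem_box x k : (x \in box k) = vle x k.
Proof.
rewrite mem_filter andb_idr // => /vleP xk; apply/mapP.
exists [ffun i => inord (x i)]; first by rewrite mem_enum.
apply/ffunP => i; rewrite !ffunE inordK // ltnS (leq_trans (xk i)) //.
exact: (leq_bigmax i).
Qed.

Lemma box_uniq k : uniq (box k).
Proof. by rewrite filter_uniq // (map_inj_uniq (@vof_inj _)) enum_uniq. Qed.

Section BoxSums.
Variables (V : nmodType) (F : vec d -> V).

Lemma big_box_le l k : vle l k ->
  \sum_(m <- box l) F m = \sum_(m <- box k | vle m l) F m.
Proof.
move=> lk; rewrite -[RHS]big_filter; apply: perm_big; apply: uniq_perm.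
- exact: box_uniq.
- by rewrite filter_uniq ?box_uniq.
move=> x; rewrite mem_box mem_filter mem_box andb_idr //.
by move=> /vle_trans; apply.
Qed.

Lemma big_box_shift m k : vle m k ->
  \sum_(p <- box (vsub k m)) F (vadd m p) = \sum_(l <- box k | vle m l) F l.
Proof.
move=> /vleP mk; rewrite -(big_map (vadd m) xpredT) -[RHS]big_filter.
apply: perm_big; apply: uniq_perm.
- by rewrite map_inj_uniq ?box_uniq // => p1 p2 e12; rewrite -(vaddKv m p1) e12 vaddKv.
- by rewrite filter_uniq ?box_uniq.
move=> x; rewrite [RHS]mem_filter mem_box; apply/mapP/idP => [[p] | /andP[/vleP mx /vleP xk]].
  rewrite mem_box => /vleP pkm ->; apply/andP; split; apply/vleP => i; rewrite ffunE.
    by rewrite leq_addr.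
  by move: (pkm i); rewrite ffunE leq_subRL ?mk.
exists (vsub x m); last by apply/ffunP => i; rewrite !ffunE subnKC.
by rewrite mem_box; apply/vleP => i; rewrite !ffunE leq_sub2r.
Qed.

End BoxSums.

End Vectors.

Lemma telescope_sumr_ord (V : zmodType) (f : nat -> V) N :
  \sum_(n < N) f n - \sum_(n < N) f n.+1 = f 0%N - f N.
Proof.
rewrite -sumrB -[RHS]opprB -(telescope_sumr f (leq0n N)) big_mkord -sumrN.
by apply: eq_bigr => i _; rewrite opprB.
Qed.

Section Convolution.
Variables (R : pzRingType) (s d : nat).
Implicit Types A B C : mxseq R s d.
Implicit Types k : vec d.

Local Notation mI := (@mId R s d).

Lemma mconvE A B k : mconv A B k = \sum_(l <- box k) A l *m B (vsub k l).
Proof. by rewrite /mconv big_filter big_map big_enum_cond. Qed.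

Lemma eq_mconvl A A' B k : (forall l, vle l k -> A l = A' l) ->
  mconv A B k = mconv A' B k.
Proof. by move=> AA'; rewrite !mconvE; apply: eq_big_seq => l; rewrite mem_box => /AA' ->. Qed.

Lemma eq_mconvr A B B' k : (forall l, vle l k -> B l = B' l) ->
  mconv A B k = mconv A B' k.
Proof. by move=> BB'; rewrite !mconvE; apply: eq_bigr => l _; rewrite BB' ?vsub_le. Qed.

Lemma mconv1l A k : mconv mI A k = A k.
Proof.
rewrite mconvE (bigD1_seq (vzero d)) ?mem_box ?vle0v ?box_uniq //=.
rewrite /mId eqxx mul1mx vsubv0 big1 ?addr0 // => l /negPf ->.
by rewrite mul0mx.
Qed.

Lemma mconv1r A k : mconv A mI k = A k.
Proof.
rewrite mconvE (bigD1_seq k) ?mem_box ?vle_refl ?box_uniq //=.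
rewrite /mId vsub_eq0 ?vle_refl // eqxx mulmx1 big1_seq ?addr0 // => l /andP[lk].
by rewrite mem_box => /vsub_eq0 ->; rewrite (negPf lk) mulmx0.
Qed.

Lemma mconvBl A B C k :
  mconv (fun l => A l - B l) C k = mconv A C k - mconv B C k.
Proof. by rewrite !mconvE -sumrB; apply: eq_bigr => l _; rewrite mulmxBl. Qed.

Lemma mconvBr A B C k :
  mconv A (fun l => B l - C l) k = mconv A B k - mconv A C k.
Proof. by rewrite !mconvE -sumrB; apply: eq_bigr => l _; rewrite mulmxBr. Qed.

Lemma mconv_suml (I : Type) (r : seq I) (F : I -> mxseq R s d) B k :
  mconv (fun l => \sum_(i <- r) F i l) B k = \sum_(i <- r) mconv (F i) B k.
Proof.
rewrite mconvE; under eq_bigr do rewrite mulmx_suml.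
by rewrite exchange_big; apply: eq_bigr => i _; rewrite mconvE.
Qed.

Lemma mconv_sumr (I : Type) (r : seq I) A (F : I -> mxseq R s d) k :
  mconv A (fun l => \sum_(i <- r) F i l) k = \sum_(i <- r) mconv A (F i) k.
Proof.
rewrite mconvE; under eq_bigr do rewrite mulmx_sumr.
by rewrite exchange_big; apply: eq_bigr => i _; rewrite mconvE.
Qed.

Lemma mconvA A B C k : mconv (mconv A B) C k = mconv A (mconv B C) k.
Proof.
rewrite mconvE.
under eq_big_seq => l.
  rewrite mem_box => lk; rewrite mconvE mulmx_suml (big_box_le _ lk).
  over.
rewrite /= (exchange_big_dep xpredT) //= mconvE.
apply: eq_big_seq => m; rewrite mem_box => mk.
rewrite mconvE mulmx_sumr -(big_box_shift _ mk).
by apply: eq_bigr => p _; rewrite vaddKv vsubDA mulmxA.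
Qed.

Lemma mpowSr A n k : mconv (mpow A n) A k = mpow A n.+1 k.
Proof.
elim: n k => [|n IHn] k; first by rewrite mconv1l /= mconv1r.
by rewrite mconvA; apply: eq_mconvr => l _; rewrite IHn.
Qed.

End Convolution.

Section NeumannSeries.
Variables (R : pzRingType) (s d : nat) (q : mxseq R s d).

Local Notation mI := (@mId R s d).

Definition mseries N : mxseq R s d := fun k => \sum_(n < N) mpow q n k.

Lemma mconv_geometricl N k :
  mconv (fun l => mI l - q l) (mseries N) k = mI k - mpow q N k.
Proof.
by rewrite mconvBl mconv1l mconv_sumr /mseries (telescope_sumr_ord (fun n => mpow q n k)).
Qed.

Lemma mconv_geometricr N k :
  mconv (mseries N) (fun l => mI l - q l) k = mI k - mpow q N k.
Proof.
rewrite mconvBr mconv1r mconv_suml.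
by under eq_bigr do rewrite mpowSr; rewrite /mseries (telescope_sumr_ord (fun n => mpow q n k)).
Qed.

Hypothesis q0 : q (vzero d) = 0.

Lemma mpow_eq0 n k : (vsum k < n)%N -> mpow q n k = 0.
Proof.
elim: n k => [|n IHn] k //; rewrite ltnS => kn /=.
rewrite mconvE big1_seq // => l /andP[_]; rewrite mem_box => lk.
have [->|l0] := eqVneq l (vzero d); first by rewrite q0 mul0mx.
rewrite IHn ?mulmx0 //; move: (vsum_sub lk) (vsum_gt0 l0) => ? ?; lia.
Qed.

Lemma mseries_stable N k : (vsum k < N)%N -> mseries N k = mseries (vsum k).+1 k.
Proof.
move=> kN; rewrite /mseries (big_ord_widen N (fun n => mpow q n k) kN).
rewrite (bigID (fun n : 'I_N => n < (vsum k).+1)%N) /= [X in _ + X]big1 ?addr0 // => n.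
by rewrite -leqNgt; apply: mpow_eq0.
Qed.

End NeumannSeries.

Unset Implicit Arguments.

Theorem proposition7 (R : realType) (s d : nat) (q : mxseq R s d) :
  is_MTMRC_kernel q ->
  q (vzero d) = 0 ->
  exists u : mxseq R s d,
    is_conv_inverse (fun k => @mId R s d k - q k) u /\
    (forall k, exists N : nat,
        (forall n, (N <= n)%N -> mpow q n k = 0) /\
        u k = \sum_(n < N) mpow q n k).
Proof.
move=> _ q0.
pose u k := mseries q (vsum k).+1 k.
have u_below k l : vle l k -> u l = mseries q (vsum k).+1 l.
  by move=> lk; rewrite /u [RHS](mseries_stable q0) // ltnS vsum_le.
exists u; split; last by move=> k; exists (vsum k).+1; split=> // n; apply: mpow_eq0.
split=> k.
- by rewrite (eq_mconvr _ (u_below k)) mconv_geometricl mpow_eq0 ?subr0.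
- by rewrite (eq_mconvl _ (u_below k)) mconv_geometricr mpow_eq0 ?subr0.
Qed.
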